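(* Let $K_1\subset U(N_1)$ and $K_2\subset U(N_2)$ be compact connected subgroups and let $K=K_1\otimes K_2=\{U_1\otimes U_2\mid U_1\in K_1,U_2\in K_2\}\subset U(N_1N_2)$, where $\otimes$ is the Kronecker product. Let $A=A_1\otimes A_2$ and $C=C_1\otimes C_2$ with $A_i,C_i\in\mathbb{C}^{N_i\times N_i}$, $i=1,2$. Then $$W_K(C,A)=W_{K_1}(C_1,A_1)\cdot W_{K_2}(C_2,A_2)=\{z_1z_2\mid z_1\in W_{K_1}(C_1,A_1),\ z_2\in W_{K_2}(C_2,A_2)\}.$$ In particular, $W_K(C,A)$ is star-shaped (resp. convex) if either $W_{K_1}(C_1,A_1)$ is star-shaped (resp. convex) and $W_{K_2}(C_2,A_2)$ is contained in a ray $\{re^{i\varphi}\mid r\ge 0\}$ of the complex plane (for some fixed $\varphi\in\mathbb{R}$), or vice versa (with the roles of the indices $1$ and $2$ interchanged).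
   Context: For a compact connected subgroup $K\subset U(N)$ and $C,A\in\mathbb{C}^{N\times N}$, the relative $C$-numerical range is $W_K(C,A)=\{\mathrm{tr}(C^\dagger UAU^\dagger)\mid U\in K\}\subset\mathbb{C}$. *)

From HB Require Import structures.
From mathcomp Require Import all_boot all_order all_algebra.
From mathcomp Require Import complex mxtens.
From mathcomp Require Import all_classical all_reals all_analysis.

Set Implicit Arguments.
Unset Strict Implicit.
Unset Printing Implicit Defensive.

Import Order.TTheory GRing.Theory Num.Theory.
Local Open Scope ring_scope.
Local Open Scope classical_set_scope.
Local Open Scope complex_scope.

(* The complex plane R[i] gets its standard metric topology (induced by the
   modulus |z|), copied from the canonical one of the numFieldType R[i]^o.
   Matrices 'M[R[i]]_(m,n) then carry the product (entrywise) topology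
   from matrix_topology, i.e. the usual topology of C^(m x n). *)
HB.instance Definition _ (R : realType) :=
  PseudoPointedMetric.copy (R[i]) (R[i])^o.

Definition adj (R : realType) (m n : nat) (M : 'M[R[i]]_(m, n)) : 'M[R[i]]_(n, m) :=
  (map_mx (fun z : R[i] => z^*) M)^T.

Definition unitary (R : realType) (N : nat) (U : 'M[R[i]]_N) : Prop :=
  U *m adj U = 1%:M.

Definition compact_connected_subgroup_U (R : realType) (N : nat)
  (K : set 'M[R[i]]_N) : Prop :=
  [/\ K `<=` [set U | unitary U],
      K 1%:M,
      (forall U V, K U -> K V -> K (U *m V)),
      (forall U, K U -> K (adj U)) &   (* inverse of a unitary = adjoint *)
      compact K /\ connected K].

Definition relCnumrange (R : realType) (N : nat) (K : set 'M[R[i]]_N)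
  (C A : 'M[R[i]]_N) : set R[i] :=
  [set \tr (adj C *m U *m A *m adj U) | U in K].

Definition kron_group (R : realType) (N1 N2 : nat)
  (K1 : set 'M[R[i]]_N1) (K2 : set 'M[R[i]]_N2) : set 'M[R[i]]_(N1 * N2) :=
  [set tensmx U1 U2 | U1 in K1 & U2 in K2].

Definition set_mul (R : realType) (S T : set R[i]) : set R[i] :=
  [set z1 * z2 | z1 in S & z2 in T].

Definition star_shaped (R : realType) (S : set R[i]) : Prop :=
  exists2 z0, S z0 & forall (z : R[i]) (t : R), S z -> 0 <= t <= 1 ->
    S ((1 - t)%:C * z0 + t%:C * z).

Definition convexC (R : realType) (S : set R[i]) : Prop :=
  forall x y (t : R), S x -> S y -> 0 <= t <= 1 ->
    S ((1 - t)%:C * x + t%:C * y).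

Definition in_ray (R : realType) (S : set R[i]) : Prop :=
  exists phi : R, forall z, S z ->
    exists2 r : R, 0 <= r & z = (r * cos phi) +i* (r * sin phi).

From HB Require Import structures.
From mathcomp Require Import all_boot all_order all_algebra.
From mathcomp Require Import complex mxtens.
From mathcomp Require Import all_classical all_reals all_analysis.
From mathcomp Require Import ring lra.
Import Order.TTheory GRing.Theory Num.Theory numFieldNormedType.Exports.
Local Open Scope ring_scope.
Local Open Scope classical_set_scope.

(* Since (U1 ⊗ U2) (A1 ⊗ A2) (U1 ⊗ U2)^dagger
     = (U1 A1 U1^dagger) ⊗ (U2 A2 U2^dagger)
   and tr (X ⊗ Y) = tr X tr Y, the range for K1 ⊗ K2 is the product set
   W1 W2.  For the geometric claims, W2 is the continuous image of the
   connected group K2, hence connected, and a connected subset of a ray is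
   e I for a unit vector e and an interval I of nonnegative reals.  A point
   (1 - t) z1 r1 e + t z2 r2 e of W1 (e I) is then r e times a point of the
   segment [z1, z2], where r = (1 - t) r1 + t r2 lies in I; so convexity,
   resp. star-shapedness, passes from W1 to W1 W2. *)

Section RelativeNumericalRange.
Variable R : realType.
Local Open Scope complex_scope.

Lemma conjc_continuous : continuous (fun z : R[i] => z^*).
Proof.
move=> z; apply/(@cvgrPdist_lt R[i] R[i]^o _ (nbhs z) _) => e e0.
apply: filterS (@cvgr_dist_lt R[i] R[i]^o _ (nbhs z) _ id z cvg_id e e0) => w.
by rewrite -rmorphB normcJ.
Qed.

Lemma Re_continuous : continuous (fun z : R[i] => complex.Re z).
Proof.
move=> z; apply/(@cvgrPdist_lt R R^o _ (nbhs z) _) => e e0.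
have e0C : 0 < e%:C by rewrite ltcR.
apply: filterS (@cvgr_dist_lt R[i] R[i]^o _ (nbhs z) _ id z cvg_id _ e0C) => w.
rewrite -ltcR; apply: le_lt_trans; rewrite -raddfB; exact: normc_ge_Re.
Qed.

Lemma continuous_mulc (T : topologicalType) (f g : T -> R[i]) :
  continuous f -> continuous g -> continuous (fun x => f x * g x).
Proof. by move=> cf cg x; apply: cvgM; [exact: cf | exact: cg]. Qed.

Lemma continuous_sumc (T : topologicalType) (I : Type) (r : seq I)
    (F : I -> T -> R[i]) :
  (forall i, continuous (F i)) -> continuous (fun x => \sum_(i <- r) F i x).
Proof.
by move=> cF; apply: continuous_big => //; exact: (@add_continuous R[i]^o).
Qed.

Definition entrywise_continuous {T : topologicalType} {m n}
    (F : T -> 'M[R[i]]_(m, n)) :=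
  forall i j, continuous (fun x => F x i j).

Lemma entrywise_continuous_cst (T : topologicalType) m n (M : 'M[R[i]]_(m, n)) :
  entrywise_continuous (fun _ : T => M).
Proof. by move=> i j x; exact: cvg_cst. Qed.

Lemma entrywise_continuous_id m n :
  entrywise_continuous (fun M : 'M[R[i]]_(m, n) => M).
Proof. by move=> i j; exact: coord_continuous. Qed.

Lemma entrywise_continuous_mul {T : topologicalType} {m n p}
    {F : T -> 'M[R[i]]_(m, n)} {G : T -> 'M[R[i]]_(n, p)} :
  entrywise_continuous F -> entrywise_continuous G ->
  entrywise_continuous (fun x => F x *m G x).
Proof.
move=> cF cG i j; under eq_fun do rewrite mxE.
by apply: continuous_sumc => k; exact: continuous_mulc.
Qed.

Lemma entrywise_continuous_adj {T : topologicalType} {m n}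
    {F : T -> 'M[R[i]]_(m, n)} :
  entrywise_continuous F -> entrywise_continuous (fun x => adj (F x)).
Proof.
move=> cF i j; under eq_fun do rewrite !mxE.
by move=> x; apply: continuous_comp (cF j i x) (conjc_continuous _).
Qed.

Lemma relCnumrange_connected N (K : set 'M[R[i]]_N) (C A : 'M[R[i]]_N) :
  connected K -> connected (relCnumrange K C A).
Proof.
have cU := @entrywise_continuous_id N N.
have cM M := @entrywise_continuous_cst 'M[R[i]]_N N N M.
have cF : entrywise_continuous (fun U : 'M[R[i]]_N => adj C *m U *m A *m adj U).
  apply: entrywise_continuous_mul _ (entrywise_continuous_adj cU).
  apply: entrywise_continuous_mul _ (cM A).
  exact: entrywise_continuous_mul (cM (adj C)) cU.
move=> cK; apply: connected_continuous_connected cK _.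
by apply: continuous_subspaceT; apply: continuous_sumc => i; exact: cF.
Qed.

Lemma adj_tensmx m n p q (M : 'M[R[i]]_(m, n)) (P : 'M[R[i]]_(p, q)) :
  adj (M *t P) = adj M *t adj P.
Proof. by rewrite /adj (map_mxT conjc) trmx_tens. Qed.

Lemma mxtrace_tensmx m n (M : 'M[R[i]]_m) (P : 'M[R[i]]_n) :
  \tr (M *t P) = \tr M * \tr P.
Proof.
by rewrite /mxtrace mxtens.mulr_sum; apply: eq_bigr => k _; rewrite mxE.
Qed.

Lemma relCnumrange_kron N1 N2 (K1 : set 'M[R[i]]_N1) (K2 : set 'M[R[i]]_N2)
    (C1 A1 : 'M[R[i]]_N1) (C2 A2 : 'M[R[i]]_N2) :
  relCnumrange (kron_group K1 K2) (C1 *t C2) (A1 *t A2) =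
  set_mul (relCnumrange K1 C1 A1) (relCnumrange K2 C2 A2).
Proof.
pose f N (C A U : 'M[R[i]]_N) := \tr (adj C *m U *m A *m adj U).
have fE (U1 : 'M[R[i]]_N1) (U2 : 'M[R[i]]_N2) :
    f _ (C1 *t C2) (A1 *t A2) (U1 *t U2) = f _ C1 A1 U1 * f _ C2 A2 U2.
  by rewrite /f !adj_tensmx !tensmx_mul mxtrace_tensmx.
apply/seteqP; split=> z.
  case=> _ [U1 KU1 [U2 KU2 <-]] <-; rewrite -/(f _ _ _ _) fE.
  by exists (f _ C1 A1 U1); [exists U1 | exists (f _ C2 A2 U2) => //; exists U2].
case=> _ [U1 KU1 <-] [_ [U2 KU2 <-] <-].
by exists (U1 *t U2); [exists U1 => //; exists U2 | rewrite -/(f _ _ _ _) fE].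
Qed.

Lemma set_mulC (S T : set R[i]) : set_mul S T = set_mul T S.
Proof.
by apply/seteqP; split=> _ [a Sa [b Tb <-]];
  exists b => //; exists a => //; rewrite mulrC.
Qed.

Definition on_ray (e : R[i]) (I : set R) : set R[i] := [set r%:C * e | r in I].

Lemma connected_in_ray {T : set R[i]} : connected T -> in_ray T ->
  exists e (I : set R),
    [/\ is_interval I, I `<=` [set r | 0 <= r] & T = on_ray e I].
Proof.
move=> cT [phi T_ray].
set e := (cos phi) +i* (sin phi).
have e_unit : e * e^* = 1.
  rewrite /e; simpc; rewrite -!expr2 cos2Dsin2; apply/eqP.
  by rewrite eq_complex /= eqxx /= mulrC addNr.
pose h z := complex.Re (z * e^*).
have h_cont : continuous h.
  have mul_cont : continuous (fun z : R[i] => z * e^*).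
    by apply: continuous_mulc => [z|]; [exact: cvg_id | exact: cst_continuous].
  by move=> z; exact: continuous_comp (mul_cont z) (Re_continuous _).
have T_coord z : T z -> 0 <= h z /\ z = (h z)%:C * e.
  move=> /T_ray [r r0 ->].
  have -> : (r * cos phi) +i* (r * sin phi) = r%:C * e by rewrite /e; simpc.
  by rewrite /h -mulrA e_unit mulr1.
exists e, (h @` T); split.
- apply/connected_intervalP/connected_continuous_connected => //.
  exact: continuous_subspaceT.
- by move=> _ [z /T_coord [h_ge0 _] <-].
- apply/seteqP; split=> z.
    by move=> Tz; exists (h z); [exists z | have [] := T_coord z Tz].
  by case=> _ [w Tw <-] <-; have [_ <-] := T_coord w Tw.
Qed.

Lemma is_interval_convex_comb (I : set R) (x y t : R) :
  is_interval I -> I x -> I y -> 0 <= t <= 1 -> I ((1 - t) * x + t * y).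
Proof.
move=> iI Ix Iy /andP[t0 t1].
have [xy|yx] := leP x y; [apply: (iI x y) | apply: (iI y x)] => //;
  apply/andP; split; nra.
Qed.

Lemma conic_comb_segment (z1 z2 : R[i]) {a b : R} : 0 <= a -> 0 <= b ->
  exists2 s : R, 0 <= s <= 1 &
    a%:C * z1 + b%:C * z2 = (a + b)%:C * ((1 - s)%:C * z1 + s%:C * z2).
Proof.
move=> a0 b0; have [ab0|ab_neq0] := eqVneq (a + b) 0.
  have [-> ->] : a = 0 /\ b = 0 by split; lra.
  by exists 0; rewrite ?lexx ?ler01 // addr0 rmorph0 !mul0r add0r.
have ab_gt0 : 0 < a + b by rewrite lt0r ab_neq0 /= addr_ge0.
have abE : (a + b) * (b / (a + b)) = b by rewrite mulrCA mulfV // mulr1.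
exists (b / (a + b)).
  by rewrite divr_ge0 ?addr_ge0 //= ler_pdivrMr // mul1r lerDr.
by rewrite mulrDr !mulrA -!rmorphM /= mulrBr mulr1 abE addrK.
Qed.

Lemma set_mul_on_ray_convex_comb (S : set R[i]) (e : R[i]) (I : set R)
    (z1 z2 : R[i]) (r1 r2 t : R) :
  is_interval I -> I `<=` [set r | 0 <= r] -> I r1 -> I r2 -> 0 <= t <= 1 ->
  (forall s : R, 0 <= s <= 1 -> S ((1 - s)%:C * z1 + s%:C * z2)) ->
  set_mul S (on_ray e I)
    ((1 - t)%:C * (z1 * (r1%:C * e)) + t%:C * (z2 * (r2%:C * e))).
Proof.
move=> iI I_ge0 Ir1 Ir2 t01 S_seg; have /andP[t0 t1] := t01.
have a0 : 0 <= (1 - t) * r1 by apply: mulr_ge0; [rewrite subr_ge0 | exact: I_ge0].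
have b0 : 0 <= t * r2 by apply: mulr_ge0 => //; exact: I_ge0.
have [s s01 segE] := conic_comb_segment z1 z2 a0 b0.
have -> : (1 - t)%:C * (z1 * (r1%:C * e)) + t%:C * (z2 * (r2%:C * e)) =
    (((1 - t) * r1)%:C * z1 + (t * r2)%:C * z2) * e.
  by rewrite !rmorphM /=; ring.
rewrite segE; exists ((1 - s)%:C * z1 + s%:C * z2); first exact: S_seg.
exists (((1 - t) * r1 + t * r2)%:C * e); last by rewrite mulrCA mulrA.
by exists ((1 - t) * r1 + t * r2) => //; exact: is_interval_convex_comb.
Qed.

Lemma convexC_set_mul_ray (S T : set R[i]) :
  convexC S -> connected T -> in_ray T -> convexC (set_mul S T).
Proof.
move=> cS cT /(connected_in_ray cT) [e [I [iI I_ge0 ->]]].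
move=> _ _ t [z1 Sz1 [_ [r1 Ir1 <-] <-]] [z2 Sz2 [_ [r2 Ir2 <-] <-]] t01.
by apply: set_mul_on_ray_convex_comb => // s; exact: cS.
Qed.

Lemma star_shaped_set_mul_ray (S T : set R[i]) :
  star_shaped S -> connected T -> in_ray T -> T !=set0 ->
  star_shaped (set_mul S T).
Proof.
move=> [z0 Sz0 starS] cT /(connected_in_ray cT) [e [I [iI I_ge0 ->]]].
move=> [_ [r0 Ir0 _]].
exists (z0 * (r0%:C * e)).
  by exists z0 => //; exists (r0%:C * e) => //; exists r0.
move=> _ t [z Sz [_ [r Ir <-] <-]] t01.
by apply: set_mul_on_ray_convex_comb => // s; exact: starS.
Qed.

End RelativeNumericalRange.

Theorem proposition2p9 (R : realType) (N1 N2 : nat)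
  (K1 : set 'M[R[i]]_N1) (K2 : set 'M[R[i]]_N2)
  (A1 C1 : 'M[R[i]]_N1) (A2 C2 : 'M[R[i]]_N2) :
  compact_connected_subgroup_U K1 ->
  compact_connected_subgroup_U K2 ->
  let K := kron_group K1 K2 in
  let W := relCnumrange K (tensmx C1 C2) (tensmx A1 A2) in
  let W1 := relCnumrange K1 C1 A1 in
  let W2 := relCnumrange K2 C2 A2 in
  [/\ W = set_mul W1 W2,
      (star_shaped W1 /\ in_ray W2) \/ (star_shaped W2 /\ in_ray W1) ->
        star_shaped W &
      (convexC W1 /\ in_ray W2) \/ (convexC W2 /\ in_ray W1) ->
        convexC W].
Proof.
move=> [_ K1_1 _ _ [_ K1_conn]] [_ K2_1 _ _ [_ K2_conn]] K W W1 W2.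
have W1_conn : connected W1 by exact: relCnumrange_connected.
have W2_conn : connected W2 by exact: relCnumrange_connected.
have W1_n0 : W1 !=set0 by eexists; exists 1%:M.
have W2_n0 : W2 !=set0 by eexists; exists 1%:M.
rewrite /W relCnumrange_kron; split=> //.
- by case=> -[starW rayW]; [|rewrite set_mulC]; exact: star_shaped_set_mul_ray.
- by case=> -[convW rayW]; [|rewrite set_mulC]; exact: convexC_set_mul_ray.
Qed.
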